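(* Let $q$ be a prime power, $\mathbb{F}$ an extension field of $\mathbb{F}_q$, and $C$ an $[n,k]_{\mathbb{F}}$ code that is MRD, with generator matrix $G\in\mathbb{F}^{k\times n}$. Let $V_1,\dots,V_\ell$ be $\mathbb{F}_q$-subspaces of $\mathbb{F}_q^n$, each of dimension at most $k$. Then $\dim\big(\bigcap_{i=1}^\ell G_{V_i}\big)\ge\dim\big(\bigcap_{i=1}^\ell W_{V_i}\big)$, where $W=(Z_{i,j})_{i\in[k],j\in[n]}\in\mathbb{F}(Z_{1,1},\dots,Z_{k,n})^{k\times n}$ is a matrix of independent variables.
   Context: $C=\{G^T\bm{u}:\bm{u}\in\mathbb{F}^k\}$ is a $k$-dimensional subspace of $\mathbb{F}^n$; it is MRD if every nonzero codeword $\bm{v}$ satisfies $\dim_{\mathbb{F}_q}\mathrm{span}_{\mathbb{F}_q}\{v_1,\dots,v_n\}\ge n-k+1$. For an $\mathbb{F}_q$-subspace $V\subseteq\mathbb{F}_q^n$ and a matrix $H$ with $n$ columns, $H_V$ is the column span (over the field containing the entries of $H$) of $HA$, where $A\in\mathbb{F}_q^{n\times\dim V}$ is any matrix whose $\mathbb{F}_q$-column span is $V$; dimensions of $G_{V_i}$-intersections are over $\mathbb{F}$ and of $W_{V_i}$-intersections over $\mathbb{F}(Z_{1,1},\dots,Z_{k,n})$. *)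

From HB Require Import structures.
From mathcomp Require Import all_boot all_order all_algebra.
From mathcomp Require Import fraction.
From mathcomp Require Import mpoly.
Set Implicit Arguments. Unset Strict Implicit. Unset Printing Implicit Defensive.
Import Order.TTheory GRing.Theory Num.Theory.
Local Open Scope ring_scope.

(* K plays the role of F_q (a finite field, so q = #|K| is a prime power);
   F is an extension field of K, given by the (injective) field morphism iota. *)

Definition Fq_indep (K : finFieldType) (F : fieldType) (iota : {rmorphism K -> F})
  (n : nat) (v : 'rV[F]_n) (S : {set 'I_n}) : bool :=
  [forall a : {ffun 'I_n -> K},
     (\sum_(j in S) iota (a j) * v 0 j == 0) ==> [forall j in S, a j == 0]].

Definition Fq_rank (K : finFieldType) (F : fieldType) (iota : {rmorphism K -> F})
  (n : nat) (v : 'rV[F]_n) : nat :=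
  \max_(S : {set 'I_n} | Fq_indep iota v S) #|S|.

(* The code C = {G^T u : u in F^k} is MRD: every nonzero codeword has
   F_q-rank at least n - k + 1. (codeword G^T u written as row vector u^T G) *)
Definition is_MRD (K : finFieldType) (F : fieldType) (iota : {rmorphism K -> F})
  (k n : nat) (G : 'M[F]_(k, n)) : Prop :=
  forall u : 'rV[F]_k, u *m G != 0 -> (n - k + 1 <= Fq_rank iota (u *m G))%N.

(* H_V for an F_q-subspace V of F_q^n, represented as the row space of
   V : 'M[K]_n.  With A := V^T (whose F_q-column span is V), H_V is the column
   span of H *m A; we represent it by the row space of its transpose
   (H *m A)^T = A^T *m H^T = V *m H^T, a subspace of 'rV_k. *)
Definition subsp_img (K : finFieldType) (L : fieldType) (f : K -> L)
  (k n : nat) (H : 'M[L]_(k, n)) (V : 'M[K]_n) : 'M[L]_(n, k) :=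
  map_mx f V *m H^T.

Definition ratfun (F : fieldType) (k n : nat) : fieldType :=
  {fraction {mpoly F[k * n]}}.

Definition to_ratfun (K : finFieldType) (F : fieldType) (iota : {rmorphism K -> F})
  (k n : nat) (x : K) : ratfun F k n :=
  tofrac (mpolyC (k * n) (iota x)).

Definition Wgen (F : fieldType) (k n : nat) : 'M[ratfun F k n]_(k, n) :=
  \matrix_(i < k, j < n) tofrac ('X_(mxvec_index i j) : {mpoly F[k * n]}).

From HB Require Import structures.
From mathcomp Require Import all_boot all_order all_algebra.
From mathcomp Require Import fraction mpoly zify.
Set Implicit Arguments. Unset Strict Implicit. Unset Printing Implicit Defensive.
Import Order.TTheory GRing.Theory Num.Theory.
Local Open Scope ring_scope.

(* If the rows of Y_i beyond r_i vanish, the intersection of the row spaces of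
   Y_1, ..., Y_l is the image, under (z, x) |-> z, of the solution space of the
   linear system x_i Y_i = z, x_i supported on the first r_i coordinates.
   Taking for Y_i the image under H of a basis of V_i padded with zero rows gives
   a matrix M(H), polynomial in the entries of H, with
   dim (cap_i H_{V_i}) <= dim ker M(H), and (z, x) |-> z is injective on ker M(G)
   when G is MRD: G maps every F_q-subspace of dimension at most k injectively,
   since a dependency would yield a nonzero codeword orthogonal to a
   k-dimensional F_q-space, hence of F_q-rank at most n - k.  Finally M(G) and
   M(W) both specialise one polynomial matrix, M(W) being its image in the
   fraction field, so rank M(G) <= rank M(W). *)

Section IntersectionSystem.
Variables (R : comNzRingType) (k n l : nat).
Implicit Types (Y : 'I_l -> 'M[R]_(n, k)) (C : 'I_l -> 'M[R]_n).

(* v encodes (z, x_1, ..., x_l) as row_mx z (mxvec x). *)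
Definition cap_sys Y C (v : 'rV[R]_(k + l * n)) : 'rV[R]_(l * (k + n)) :=
  mxvec (\matrix_(i < l) row_mx (row i (vec_mx (rsubmx v)) *m Y i - lsubmx v)
                                (row i (vec_mx (rsubmx v)) *m C i)).

Lemma cap_sys_is_linear Y C : linear (cap_sys Y C).
Proof.
move=> a u v; rewrite /cap_sys -linearP; congr mxvec.
apply/row_matrixP => i; rewrite linearP /= !rowK !linearP /=.
rewrite !mulmxDl -!scalemxAl !rowK scale_row_mx add_row_mx scalerBr.
by congr row_mx; rewrite scalerN addrACA.
Qed.

HB.instance Definition _ Y C :=
  GRing.isLinear.Build R _ _ *:%R (cap_sys Y C) (cap_sys_is_linear Y C).

Definition cap_sys_mx Y C := lin1_mx (cap_sys Y C).

Lemma mul_cap_sys_mx Y C v : v *m cap_sys_mx Y C = cap_sys Y C v.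
Proof. exact: mul_rV_lin1. Qed.

Lemma cap_sys_eq0 Y C v :
  cap_sys Y C v = 0 <->
  forall i, row i (vec_mx (rsubmx v)) *m Y i = lsubmx v
            /\ row i (vec_mx (rsubmx v)) *m C i = 0.
Proof.
rewrite /cap_sys; split=> [/eqP|H].
  rewrite mxvec_eq0 => /eqP/row_matrixP H i.
  move: (H i); rewrite rowK row0 => /eqP; rewrite row_mx_eq0 subr_eq0.
  by case/andP=> /eqP-> /eqP->.
apply/eqP; rewrite mxvec_eq0; apply/eqP/row_matrixP => i.
by rewrite rowK row0 -row_mx0; case: (H i) => -> ->; rewrite subrr.
Qed.

End IntersectionSystem.

Lemma map_cap_sys_mx (R S : comNzRingType) (phi : {rmorphism R -> S}) k n l
    (Y : 'I_l -> 'M[R]_(n, k)) (C : 'I_l -> 'M[R]_n)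
    (Yf : 'I_l -> 'M[S]_(n, k)) (Cf : 'I_l -> 'M[S]_n) :
    (forall i, map_mx phi (Y i) = Yf i) -> (forall i, map_mx phi (C i) = Cf i) ->
  map_mx phi (cap_sys_mx Y C) = cap_sys_mx Yf Cf.
Proof.
move=> HY HC; apply: map_lin1_mx => v; rewrite /cap_sys map_mxvec.
congr mxvec; apply/row_matrixP => i.
rewrite -map_row !rowK map_row_mx map_mxB !map_mxM map_row map_vec_mx.
by rewrite map_lsubmx map_rsubmx HY HC.
Qed.

Section IntersectionDimension.
Variables (L : fieldType) (k n l : nat).
Implicit Types (Y : 'I_l -> 'M[L]_(n, k)) (C : 'I_l -> 'M[L]_n).

Let lproj : 'M[L]_(k + l * n, k) := col_mx 1%:M 0.

Let mul_lproj (v : 'rV[L]_(k + l * n)) : v *m lproj = lsubmx v.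
Proof. by rewrite -{1}(hsubmxK v) mul_row_col mulmx1 mulmx0 addr0. Qed.

Lemma mxrank_bigcap_le_ker Y (r : 'I_l -> nat) :
    (forall i, pid_mx (r i) *m Y i = Y i) -> (forall i, r i <= n)%N ->
  (\rank (\bigcap_(i < l) <<Y i>>)%MS
     <= \rank (kermx (cap_sys_mx Y (fun i => copid_mx (r i)))))%N.
Proof.
move=> HY Hr; apply: leq_trans (mxrankM_maxl _ lproj).
apply: mxrankS; apply/row_subP => j; set z := row j _.
have zY i : (z <= Y i)%MS.
  by apply: submx_trans (row_sub j _) _; rewrite -(genmxE (Y i)) (bigcapmx_inf i).
pose x : 'M[L]_(l, n) := \matrix_i (z *m pinvmx (Y i) *m pid_mx (r i)).
have -> : z = row_mx z (mxvec x) *m lproj by rewrite mul_lproj row_mxKl.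
apply: submxMr; apply/sub_kermxP; rewrite mul_cap_sys_mx.
apply/cap_sys_eq0 => i; rewrite row_mxKr row_mxKl mxvecK rowK; split.
  by rewrite -[_ *m Y i]mulmxA HY mulmxKpV.
by rewrite -[_ *m copid_mx _]mulmxA mul_pid_mx_copid ?mulmx0.
Qed.

Lemma mxrank_ker_le_bigcap Y C :
    (forall i (x : 'rV_n), x *m C i = 0 -> x *m Y i = 0 -> x = 0) ->
  (\rank (kermx (cap_sys_mx Y C)) <= \rank (\bigcap_(i < l) <<Y i>>)%MS)%N.
Proof.
move=> Hinj; set M := cap_sys_mx Y C.
have ker_lproj0 : (kermx M :&: kermx lproj)%MS = 0.
  apply/eqP/rowV0P => v; rewrite sub_capmx => /andP[/sub_kermxP].
  rewrite mul_cap_sys_mx => /cap_sys_eq0 Hv /sub_kermxP; rewrite mul_lproj => v0.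
  have x0 : vec_mx (rsubmx v) = 0.
    apply/row_matrixP => i; rewrite row0; case: (Hv i); rewrite v0 => H1 H2.
    exact: Hinj H2 H1.
  by rewrite -(hsubmxK v) v0 -(vec_mxK (rsubmx v)) x0 linear0 row_mx0.
rewrite -(mxrank_mul_ker (kermx M) lproj) ker_lproj0 mxrank0 addn0.
apply: mxrankS; apply/row_subP => j; rewrite row_mul mul_lproj.
have /sub_kermxP : (row j (kermx M) <= kermx M)%MS by exact: row_sub.
rewrite mul_cap_sys_mx => /cap_sys_eq0 Hj.
apply/sub_bigcapmxP => i _; rewrite genmxE; case: (Hj i) => <- _; exact: submxMl.
Qed.

End IntersectionDimension.

(* A nonsingular maximal minor of P^phi comes from a minor of P with nonzero
   determinant. *)
Lemma mxrank_map_le_frac (R : idomainType) (L : fieldType)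
    (phi : {rmorphism R -> L}) m p (P : 'M[R]_(m, p)) :
  (\rank (map_mx phi P) <= \rank (map_mx (@tofrac R) P))%N.
Proof.
set A := map_mx phi P; set Pf := map_mx (@tofrac R) P.
have fullA : row_full (rowsub (maxrankfun A) A)^T.
  by rewrite /row_full mxrank_tr (eqnP (maxrowsub_free A)).
set g := fullrankfun fullA; set f := maxrankfun A.
have minorA : rowsub g (rowsub f A)^T \in unitmx := fullrowsub_unit fullA.
have minorE (S : comNzRingType) (psi : {rmorphism R -> S}) :
    rowsub g (rowsub f (map_mx psi P))^T = map_mx psi (rowsub g (rowsub f P)^T).
  by apply/matrixP => i j; rewrite !mxE.
have minorPf : rowsub g (rowsub f Pf)^T \in unitmx.
  move: minorA; rewrite /A /Pf !minorE !unitmxE !det_map_mx !unitfE tofrac_eq0.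
  by apply: contraNneq => ->; rewrite rmorph0.
rewrite -(mxrank_unit minorPf); apply: leq_trans (mxrankS (rowsub_sub g _)) _.
by rewrite mxrank_tr mxrankS ?rowsub_sub.
Qed.

Section PaddedRowBase.
Variables (K : fieldType) (n : nat).
Implicit Type A : 'M[K]_n.

Definition padded_row_base A : 'M[K]_n := pid_mx (\rank A) *m row_ebase A.

Lemma pid_padded_row_base A : pid_mx (\rank A) *m padded_row_base A = padded_row_base A.
Proof. by rewrite mulmxA pid_mx_id ?rank_leq_col. Qed.

Lemma mxrank_padded_row_base A : \rank (padded_row_base A) = \rank A.
Proof.
by rewrite mxrankMfree ?rank_pid_mx ?rank_leq_col ?row_free_unit ?row_ebase_unit.
Qed.

Lemma eqmx_padded_row_base A : (padded_row_base A :=: A)%MS.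
Proof.
rewrite -{2}(mulmx_ebase A) -mulmxA; apply/eqmx_sym/eqmxMfull.
by rewrite row_full_unit col_ebase_unit.
Qed.

End PaddedRowBase.

Lemma genmx_subsp_img_padded (K : finFieldType) (L : fieldType)
    (f : {rmorphism K -> L}) k n (H : 'M[L]_(k, n)) (A : 'M[K]_n) :
  <<subsp_img f H A>>%MS = <<subsp_img f H (padded_row_base A)>>%MS.
Proof.
apply/genmxP/eqmxP/eqmxMr/(map_eqmx f).
exact/eqmx_sym/eqmx_padded_row_base.
Qed.

Definition subsp_sys (K : finFieldType) (L : comNzRingType) (f : {rmorphism K -> L})
    k n l (H : 'M[L]_(k, n)) (V : 'I_l -> 'M[K]_n) :=
  cap_sys_mx (fun i => map_mx f (padded_row_base (V i)) *m H^T)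
             (fun i => copid_mx (\rank (V i))).

Lemma mxrank_bigcap_subsp_img_le_ker (K : finFieldType) (L : fieldType)
    (f : {rmorphism K -> L}) k n l (H : 'M[L]_(k, n)) (V : 'I_l -> 'M[K]_n) :
  (\rank (\bigcap_(i < l) <<subsp_img f H (V i)>>)%MS
     <= \rank (kermx (subsp_sys f H V)))%N.
Proof.
under eq_bigr do rewrite genmx_subsp_img_padded.
apply: mxrank_bigcap_le_ker => i; last exact: rank_leq_col.
by rewrite /subsp_img mulmxA -(map_pid_mx f) -map_mxM pid_padded_row_base.
Qed.

Lemma map_subsp_sys (K : finFieldType) (L M : comNzRingType)
    (phi : {rmorphism L -> M}) (f : {rmorphism K -> L}) (g : {rmorphism K -> M}) k n l
    (H : 'M[L]_(k, n)) (Hphi : 'M[M]_(k, n)) (V : 'I_l -> 'M[K]_n) :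
    phi \o f =1 g -> map_mx phi H = Hphi ->
  map_mx phi (subsp_sys f H V) = subsp_sys g Hphi V.
Proof.
move=> fg HH; apply: map_cap_sys_mx => i; last exact: map_copid_mx.
rewrite map_mxM -map_trmx HH -map_mx_comp; congr (_ *m _); exact: eq_map_mx.
Qed.

Section MRD.
Variables (K : finFieldType) (F : fieldType) (iota : {rmorphism K -> F}) (k n : nat).

(* If w *m B vanishes off S, it is a K-dependency of c on S, hence w = 0: the
   columns of B outside S already have rank k. *)
Lemma Fq_rank_le_orthogonal (B : 'M[K]_(k, n)) (c : 'rV[F]_n) :
  \rank B = k -> c *m (map_mx iota B)^T = 0 -> (Fq_rank iota c <= n - k)%N.
Proof.
move=> rkB cB; apply/bigmax_leqP => S indS.
pose T := ~: S; pose BT := colsub (fun t : 'I_#|T| => enum_val t) B.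
suff kerBT : kermx BT = 0.
  have := mxrank_ker BT; rewrite kerBT mxrank0 => /esym/eqP; rewrite subn_eq0.
  move/leq_trans/(_ (rank_leq_col BT)); rewrite /T; have := cardsC S.
  rewrite card_ord; lia.
apply/eqP/rowV0P => w /sub_kermxP wBT; pose a := w *m B.
have aT j : j \notin S -> a 0 j = 0.
  move=> jS; have jT : j \in T by rewrite in_setC.
  move/matrixP/(_ 0 (enum_rank_in jT j)): wBT; rewrite !mxE.
  by under eq_bigr do rewrite mxE (enum_rankK_in jT jT).
have dep : \sum_(j in S) iota ([ffun j => a 0 j] j) * c 0 j = 0.
  have : map_mx iota a *m c^T = 0.
    by rewrite map_mxM -mulmxA -[_ *m c^T]trmxK trmx_mul trmxK cB trmx0 mulmx0.
  move/matrixP/(_ 0 0); rewrite !mxE (bigID (mem S)) /= [X in _ + X]big1 ?addr0.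
    by move=> H; rewrite -[RHS]H; apply: eq_bigr => j _; rewrite ffunE !mxE.
  by move=> j /aT; rewrite !mxE => ->; rewrite rmorph0 mul0r.
move/forallP/(_ [ffun j => a 0 j])/implyP/(_ (introT eqP dep))/forall_inP: indS.
move=> aS; have a0 : a = 0.
  apply/rowP => j; rewrite [RHS]mxE; have [jS|jS] := boolP (j \in S); last exact: aT.
  by move/eqP: (aS j jS); rewrite ffunE.
by apply: (row_free_inj (introT eqP rkB)); rewrite mul0mx.
Qed.

Variable G : 'M[F]_(k, n).
Hypotheses (rkG : \rank G = k) (MRD_G : is_MRD iota G).

Lemma MRD_mxrank_full (B : 'M[K]_(k, n)) :
  \rank B = k -> \rank (map_mx iota B *m G^T) = k.
Proof.
move=> rkB; apply/eqP; rewrite eqn_leq rank_leq_row leqNgt /=; apply/negP => lt_k.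
have /rowV0Pn[u /sub_kermxP uB u0] : kermx (map_mx iota B *m G^T)^T != 0.
  by rewrite -mxrank_eq0 mxrank_ker mxrank_tr subn_eq0 -ltnNge.
rewrite trmx_mul trmxK mulmxA in uB.
have uG0 : u *m G != 0.
  apply: contra u0 => /eqP uG; apply/eqP/(row_free_inj (introT eqP rkG)).
  by rewrite uG mul0mx.
have := MRD_G uG0; have := Fq_rank_le_orthogonal rkB uB; lia.
Qed.

Lemma MRD_mxrank (A : 'M[K]_n) :
  (\rank A <= k)%N -> \rank (subsp_img iota G A) = \rank A.
Proof.
move=> rkA; pose B : 'M[K]_(k, n) := pid_mx k *m row_ebase A.
have rkB : \rank B = k.
  by rewrite mxrankMfree ?rank_pid_mx ?row_free_unit ?row_ebase_unit // -rkG rank_leq_col.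
pose D : 'M[K]_(n, k) := col_ebase A *m pid_mx (\rank A).
have AE : A = D *m B.
  rewrite mulmxA -[col_ebase A *m _ *m _]mulmxA mul_pid_mx.
  by rewrite (minn_idPl rkA) (minn_idPr rkA) mulmx_ebase.
apply/eqP; rewrite eqn_leq; apply/andP; split.
  by rewrite -[leqRHS](mxrank_map iota) mxrankM_maxl.
have -> : subsp_img iota G A = map_mx iota D *m (map_mx iota B *m G^T).
  by rewrite /subsp_img {1}AE map_mxM mulmxA.
rewrite mxrankMfree ?mxrank_map; first by rewrite {1}AE mxrankM_maxl.
by rewrite /row_free MRD_mxrank_full.
Qed.

Lemma MRD_padded_inj (A : 'M[K]_n) (x : 'rV[F]_n) : (\rank A <= k)%N ->
  x *m copid_mx (\rank A) = 0 -> x *m subsp_img iota G (padded_row_base A) = 0 -> x = 0.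
Proof.
move=> rkA xC xY; set r := \rank A.
have xE : x = x *m pid_mx r.
  by apply/eqP; move: xC; rewrite mulmxBr mulmx1 => /eqP; rewrite subr_eq0.
set Q := map_mx iota (row_ebase A) *m G^T.
have YQ : subsp_img iota G (padded_row_base A) = pid_mx r *m Q.
  by rewrite /subsp_img map_mxM map_pid_mx mulmxA.
have rkY : \rank ((pid_mx r : 'M_n) *m Q) = r.
  by rewrite -YQ MRD_mxrank ?mxrank_padded_row_base.
have cap0 : ((pid_mx r : 'M_n) :&: kermx Q)%MS = 0.
  apply/eqP; rewrite -mxrank_eq0; have := mxrank_mul_ker (pid_mx r : 'M[F]_n) Q.
  rewrite rkY rank_pid_mx ?rank_leq_col //; lia.
rewrite xE; apply/eqP; rewrite -submx0 -cap0 sub_capmx submxMl /=.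
by apply/sub_kermxP; rewrite -mulmxA -YQ.
Qed.

Lemma MRD_mxrank_ker_le_bigcap l (V : 'I_l -> 'M[K]_n) :
    (forall i, \rank (V i) <= k)%N ->
  (\rank (kermx (subsp_sys iota G V))
     <= \rank (\bigcap_(i < l) <<subsp_img iota G (V i)>>)%MS)%N.
Proof.
move=> rkV; under eq_bigr do rewrite genmx_subsp_img_padded.
by apply: mxrank_ker_le_bigcap => i x; apply: MRD_padded_inj.
Qed.

End MRD.

HB.instance Definition _ (K : finFieldType) (F : fieldType) (iota : {rmorphism K -> F})
    (k n : nat) :=
  GRing.RMorphism.copy (to_ratfun iota k n)
    ((@tofrac {mpoly F[k * n]}) \o @mpolyC (k * n) F \o iota)%FUN.

Lemma mxrank_subsp_sys_le_generic (K : finFieldType) (F : fieldType)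
    (iota : {rmorphism K -> F}) k n (G : 'M[F]_(k, n)) l (V : 'I_l -> 'M[K]_n) :
  (\rank (subsp_sys iota G V)
     <= \rank (subsp_sys (to_ratfun iota k n) (Wgen F k n) V))%N.
Proof.
pose R := {mpoly F[k * n]}.
pose Z : 'M[R]_(k, n) := \matrix_(i, j) 'X_(mxvec_index i j).
pose evG := meval (fun t => mxvec G 0 t).
pose MZ := subsp_sys (@mpolyC (k * n) F \o iota)%FUN Z V.
have -> : subsp_sys iota G V = map_mx evG MZ.
  apply/esym/map_subsp_sys => [x|]; first exact: mevalC.
  by apply/matrixP => i j; rewrite !mxE /= mevalXU mxvecE.
have -> : subsp_sys (to_ratfun iota k n) (Wgen F k n) V =
          map_mx (@tofrac R) MZ.
  by apply/esym/map_subsp_sys => //; apply/matrixP => i j; rewrite !mxE.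
exact: mxrank_map_le_frac.
Qed.

Theorem mainTheorem19 (K : finFieldType) (F : fieldType) (iota : {rmorphism K -> F})
  (k n : nat) (G : 'M[F]_(k, n))
  (HGrank : \rank G = k)
  (HMRD : is_MRD iota G)
  (l : nat) (V : 'I_l -> 'M[K]_n)
  (HV : forall i, (\rank (V i) <= k)%N) :
  (\rank (\bigcap_(i < l) <<subsp_img iota G (V i)>>)%MS
   >= \rank (\bigcap_(i < l) <<subsp_img (to_ratfun iota k n) (Wgen F k n) (V i)>>)%MS)%N.
Proof.
apply: leq_trans (mxrank_bigcap_subsp_img_le_ker _ _ V) _.
apply: leq_trans (MRD_mxrank_ker_le_bigcap HGrank HMRD HV).
by rewrite !mxrank_ker leq_sub2l // mxrank_subsp_sys_le_generic.
Qed.
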